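(* Let $n\ge p$, $\alpha\neq-1$, $U,\widetilde U\in St(n,p)$, and let $Q\widehat N=(I_n-UU^T)\widetilde U$ be a compact QR-decomposition with $Q\in St(n,p)$, $\widehat N\in\mathbb{R}^{p\times p}$. Consider the following shooting iteration with threshold $\epsilon>0$ and time steps $0=t_0<t_1<\dots<t_m=1$: set $\gamma\leftarrow\|\widetilde U-U\|$ and $\Delta\leftarrow\gamma\,\Pi_U(\widetilde U)/\|\Pi_U(\widetilde U)\|$; while $\gamma>\epsilon$: set $\widetilde U^s(j)\leftarrow\operatorname{Exp}^\alpha_U(t_j\Delta)$ for $j=0,\dots,m$; set $\Delta^s\leftarrow\widetilde U^s(m)-\widetilde U$ and $\gamma\leftarrow\|\Delta^s\|$; for $j=m,m-1,\dots,0$ set $\Delta^s\leftarrow\gamma\,\Pi_{\widetilde U^s(j)}(\Delta^s)/\|\Pi_{\widetilde U^s(j)}(\Delta^s)\|$; then update $\Delta\leftarrow\Delta-\Delta^s$. Then every iterate $\Delta$ produced by this iteration, and every matrix $\Delta^s$ obtained at the end of one pass through the while-loop, has a representation \[ \Delta=UA+QR,\qquad \Delta^s=UA^s+QR^s,\qquad A,A^s\in\operatorname{Skew}(p),\ R,R^s\in\mathbb{R}^{p\times p}, \] with the same matrix $Q$ for all iterates.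
   Context: $St(n,p)=\{U\in\mathbb{R}^{n\times p}: U^TU=I_p\}$; $\operatorname{Skew}(p)$ is the set of real skew-symmetric $p\times p$ matrices; $\|\cdot\|$ is the Frobenius norm. For $W\in\mathbb{R}^{n\times p}$ and $Y\in St(n,p)$, $\Pi_Y(W)=W-Y\operatorname{sym}(Y^TW)$ with $\operatorname{sym}(X)=\frac12(X+X^T)$ (orthogonal projection onto $T_YSt(n,p)=\{\Delta: Y^T\Delta\in\operatorname{Skew}(p)\}$). The $\alpha$-metric is $\langle\Delta,\widetilde\Delta\rangle^\alpha_U=\operatorname{tr}\big(\Delta^T(I_n-\frac{2\alpha+1}{2(\alpha+1)}UU^T)\widetilde\Delta\big)$ and $\operatorname{Exp}^\alpha_U(\Delta)$ is the endpoint at time $1$ of its geodesic starting at $U$ with initial velocity $\Delta$ (so $\operatorname{Exp}^\alpha_U(0)=U$). *)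

From HB Require Import structures.
From mathcomp Require Import all_boot all_order all_algebra.
From mathcomp Require Import all_classical all_reals all_analysis.

Set Implicit Arguments.
Unset Strict Implicit.
Unset Printing Implicit Defensive.

Import Order.TTheory GRing.Theory Num.Theory.
Import numFieldNormedType.Exports.
Local Open Scope ring_scope.
Local Open Scope classical_set_scope.

Section Stiefel.
Variable R : realType.
Variables n p : nat.

Definition frob_inner (X Y : 'M[R]_(n, p)) : R := \tr (X^T *m Y).
Definition frob (X : 'M[R]_(n, p)) : R := Num.sqrt (frob_inner X X).

Definition stiefel (U : 'M[R]_(n, p)) : Prop := U^T *m U = 1%:M.

Definition skew_mat (A : 'M[R]_p) : Prop := A^T = - A.

Definition symm (X : 'M[R]_p) : 'M[R]_p := 2^-1 *: (X + X^T).

Definition proj_tan (Y W : 'M[R]_(n, p)) : 'M[R]_(n, p) :=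
  W - Y *m symm (Y^T *m W).

Definition tangent (Y D : 'M[R]_(n, p)) : Prop := skew_mat (Y^T *m D).

Definition alpha_coef (alpha : R) : R := (2 * alpha + 1) / (2 * (alpha + 1)).

Definition alpha_metric (alpha : R) (U D D' : 'M[R]_(n, p)) : R :=
  \tr (D^T *m ((1%:M - alpha_coef alpha *: (U *m U^T)) *m D')).

(* Geodesics of the alpha-metric: twice differentiable curves g in St(n,p)
   that are critical points of the energy
     E(g) = 1/2 \int <g', g'>^alpha_g
           = 1/2 \int ( |g'|^2 - c |g^T g'|^2 ),   c = alpha_coef alpha,
   i.e. (Euler-Lagrange equations with the constraint g in St(n,p)) the
   ambient Euler-Lagrange expression
     d/dt (g' - c g g^T g') + c g' g'^T g
   is Frobenius-orthogonal to the tangent space T_{g(t)} St(n,p). *)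
Definition alpha_geodesic (alpha : R) (g : R -> 'M[R]_(n, p)) : Prop :=
  (forall t, stiefel (g t)) /\
  (forall t, derivable g t 1) /\
  (forall t, derivable (derive1 g) t 1) /\
  (forall t (H : 'M[R]_(n, p)), tangent (g t) H ->
     frob_inner
       (derive1 (fun s => derive1 g s
                   - alpha_coef alpha *: (g s *m (g s)^T *m derive1 g s)) t
        + alpha_coef alpha *: (derive1 g t *m (derive1 g t)^T *m g t)) H = 0).

(* Exp^alpha_U(D): endpoint at time 1 of the alpha-geodesic starting at U
   with initial velocity D (junk value 0 if no such geodesic exists). *)
Definition alpha_Exp (alpha : R) (U D : 'M[R]_(n, p)) : 'M[R]_(n, p) :=
  (xget (fun _ => 0)
     [set g | alpha_geodesic alpha g /\ g 0 = U /\ derive1 g 0 = D]) 1.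

Definition rescaled_proj (gamma : R) (Y W : 'M[R]_(n, p)) : 'M[R]_(n, p) :=
  (gamma / frob (proj_tan Y W)) *: proj_tan Y W.

(* backward loop "for j = m, m-1, ..., 0": applies the projections
   at Us(j) for j = k-1, ..., 0 (called with k = m+1). *)
Fixpoint backward (gamma : R) (Us : nat -> 'M[R]_(n, p)) (k : nat)
    (Ds : 'M[R]_(n, p)) : 'M[R]_(n, p) :=
  match k with
  | 0%N => Ds
  | k'.+1 => backward gamma Us k' (rescaled_proj gamma (Us k') Ds)
  end.

Definition shooting_body (alpha : R) (U Ut : 'M[R]_(n, p)) (m : nat)
    (t : nat -> R) (D : 'M[R]_(n, p)) :
    'M[R]_(n, p) * R * 'M[R]_(n, p) :=
  let Us := fun j => alpha_Exp alpha U (t j *: D) in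
  let Ds0 := Us m - Ut in
  let gamma := frob Ds0 in
  let Ds := backward gamma Us m.+1 Ds0 in
  (Ds, gamma, D - Ds).

Definition shooting_init (U Ut : 'M[R]_(n, p)) : 'M[R]_(n, p) * R :=
  let gamma := frob (Ut - U) in
  (rescaled_proj gamma U Ut, gamma).

Fixpoint shooting_state (alpha : R) (U Ut : 'M[R]_(n, p)) (m : nat)
    (t : nat -> R) (k : nat) : 'M[R]_(n, p) * R :=
  match k with
  | 0%N => shooting_init U Ut
  | k'.+1 =>
      let r := shooting_body alpha U Ut m t (shooting_state alpha U Ut m t k').1 in
      (r.2, r.1.2)
  end.

End Stiefel.

(* Write V := (I - U U^T) Ut, so that U^T V = 0, Ut = U (U^T Ut) + V and V = Q Nh.
   All iterates lie in the column space {U A + V M}: Ut does, Pi_Y preserves it when Y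
   does, and so does Exp^alpha_U.  For the latter, the Euler-Lagrange condition becomes the
   geodesic equation W' = c g' Om - g (g'^T g' + 2 c Om^2) for the momentum
   W = (I - c g g^T) g', where Om = g^T g' and c = alpha_coef alpha.  Hence for every P
   annihilating U and V the pair (P g, P W) solves a linear ODE Z' = Z M(t) with continuous
   coefficients, and Gronwall's inequality for |Z|^2 gives Z(1) = 0 from Z(0) = 0.  The same
   argument for (g - U, W) gives Exp^alpha_U(0) = U, so every backward pass ends with a
   projection at U and produces a vector tangent at U, i.e. one with U^T Delta skew. *)

From HB Require Import structures.
From mathcomp Require Import all_boot all_order all_algebra.
From mathcomp Require Import all_classical all_reals all_analysis.
From mathcomp Require Import lra ring.

Set Implicit Arguments.
Unset Strict Implicit.
Unset Printing Implicit Defensive.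

Import Order.TTheory GRing.Theory Num.Theory.
Import numFieldNormedType.Exports.
Local Open Scope ring_scope.

Section MatrixDerivative.
Context {R : realFieldType} {V : normedModType R}.
Implicit Types (x v : V).

Lemma is_derive_mxP a b (F : V -> 'M[R]_(a, b)) x v D :
  is_derive x v F D <-> forall i j, is_derive x v (fun y => F y i j) (D i j).
Proof.
split=> [dF i j | dF].
- have dFx : derivable F x v by case: dF.
  have dFij := (derivable_mxP F x v).1 dFx i j.
  by apply: DeriveDef => //; rewrite -(@derive_val _ _ _ _ _ _ _ dF) derive_mx // mxE.
- have dFx : derivable F x v by apply/derivable_mxP => i j; case: (dF i j).
  apply: DeriveDef => //; rewrite derive_mx //.
  by apply/matrixP => i j; rewrite mxE; case: (dF i j).
Qed.

Lemma is_derive_trmx a b (F : V -> 'M[R]_(a, b)) x v D :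
  is_derive x v F D -> is_derive x v (fun y => (F y)^T) D^T.
Proof.
move/is_derive_mxP => dF; apply/is_derive_mxP => i j; rewrite mxE.
by under eq_fun do rewrite mxE.
Qed.

Lemma is_derive_mulmx a b c (F : V -> 'M[R]_(a, b)) (G : V -> 'M[R]_(b, c))
    x v dF dG :
  is_derive x v F dF -> is_derive x v G dG ->
  is_derive x v (fun y => F y *m G y) (dF *m G x + F x *m dG).
Proof.
move=> /is_derive_mxP HF /is_derive_mxP HG; apply/is_derive_mxP => i j.
have -> : (fun y => (F y *m G y) i j) =
    \sum_k ((fun y => F y i k) * (fun y => G y k j)).
  by apply/funext => y; rewrite fct_sumE mxE.
apply: is_derive_eq.
rewrite !mxE -big_split; apply: eq_bigr => k _ /=.
by rewrite addrC [G x k j *: _]mulrC.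
Qed.

Lemma is_derive_row_mx a b c (F : V -> 'M[R]_(a, b)) (G : V -> 'M[R]_(a, c))
    x v dF dG :
  is_derive x v F dF -> is_derive x v G dG ->
  is_derive x v (fun y => row_mx (F y) (G y)) (row_mx dF dG).
Proof.
move=> /is_derive_mxP HF /is_derive_mxP HG; apply/is_derive_mxP => i j.
case: (split_ordP j) => k ->; rewrite ?row_mxEl ?row_mxEr.
- by under eq_fun do rewrite row_mxEl.
- by under eq_fun do rewrite row_mxEr.
Qed.

Lemma is_derive_col_mx a b c (F : V -> 'M[R]_(a, c)) (G : V -> 'M[R]_(b, c))
    x v dF dG :
  is_derive x v F dF -> is_derive x v G dG ->
  is_derive x v (fun y => col_mx (F y) (G y)) (col_mx dF dG).
Proof.
move=> /is_derive_mxP HF /is_derive_mxP HG; apply/is_derive_mxP => i j.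
case: (split_ordP i) => k ->; rewrite ?col_mxEu ?col_mxEd.
- by under eq_fun do rewrite col_mxEu.
- by under eq_fun do rewrite col_mxEd.
Qed.

Lemma is_derive_mulmxl a b c (A : 'M[R]_(a, b)) (F : V -> 'M[R]_(b, c)) x v dF :
  is_derive x v F dF -> is_derive x v (fun y => A *m F y) (A *m dF).
Proof.
move=> HF; apply: is_derive_eq (is_derive_mulmx (is_derive_cst A x v) HF) _.
by rewrite mul0mx add0r.
Qed.

Lemma derivable_mulmx a b c (F : V -> 'M[R]_(a, b)) (G : V -> 'M[R]_(b, c)) x v :
  derivable F x v -> derivable G x v -> derivable (fun y => F y *m G y) x v.
Proof.
by move=> /derivableP dF /derivableP dG; case: (is_derive_mulmx dF dG).
Qed.

Lemma derivable_trmx a b (F : V -> 'M[R]_(a, b)) x v :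
  derivable F x v -> derivable (fun y => (F y)^T) x v.
Proof. by move=> /derivableP dF; case: (is_derive_trmx dF). Qed.

Lemma derivable_scalemx a b (F : V -> 'M[R]_(a, b)) (k : R) x v :
  derivable F x v -> derivable (fun y => k *: F y) x v.
Proof. exact: derivableZ. Qed.

Lemma derivable_block_mx a1 a2 b1 b2 (A : V -> 'M[R]_(a1, b1))
    (B : V -> 'M[R]_(a1, b2)) (C : V -> 'M[R]_(a2, b1)) (D : V -> 'M[R]_(a2, b2)) x v :
  derivable A x v -> derivable B x v -> derivable C x v -> derivable D x v ->
  derivable (fun y => block_mx (A y) (B y) (C y) (D y)) x v.
Proof.
move=> /derivableP dA /derivableP dB /derivableP dC /derivableP dD.
under eq_fun do rewrite block_mxEv.
by case: (is_derive_col_mx (is_derive_row_mx dA dB) (is_derive_row_mx dC dD)).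
Qed.

Lemma is_derive_const_eq0 (W : normedModType R) (F : V -> W) (C : W) x v D :
  (forall y, F y = C) -> is_derive x v F D -> D = 0.
Proof.
move=> FC dF; rewrite -(@derive_val _ _ _ _ _ _ _ dF).
by rewrite (_ : F = cst C) ?derive_cst //; apply/funext.
Qed.

End MatrixDerivative.

Section Frobenius.
Variable R : realType.

Lemma frob_innerE a b (X Y : 'M[R]_(a, b)) :
  frob_inner X Y = \sum_i \sum_j X i j * Y i j.
Proof.
rewrite /frob_inner /mxtrace exchange_big /=; apply: eq_bigr => j _.
by rewrite mxE; apply: eq_bigr => i _; rewrite mxE.
Qed.

Lemma frob_innerDr a b (X Y Z : 'M[R]_(a, b)) :
  frob_inner X (Y + Z) = frob_inner X Y + frob_inner X Z.
Proof. by rewrite /frob_inner mulmxDr mxtraceD. Qed.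

Lemma frob_inner_tr a b (X Y : 'M[R]_(a, b)) : frob_inner X^T Y^T = frob_inner X Y.
Proof.
rewrite !frob_innerE exchange_big /=.
by apply: eq_bigr => j _; apply: eq_bigr => i _; rewrite !mxE.
Qed.

Lemma frob_inner_ge0 a b (X : 'M[R]_(a, b)) : 0 <= frob_inner X X.
Proof.
by rewrite frob_innerE; apply: sumr_ge0 => i _; apply: sumr_ge0 => j _; exact: sqr_ge0.
Qed.

Lemma frob_inner_eq0 a b (X : 'M[R]_(a, b)) : frob_inner X X = 0 -> X = 0.
Proof.
rewrite frob_innerE => /eqP; rewrite psumr_eq0 => [/allP X0|i _]; last first.
  by apply: sumr_ge0 => j _; exact: sqr_ge0.
apply/matrixP => i j; rewrite mxE; move: (X0 i (mem_index_enum i)).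
rewrite /= psumr_eq0 => [/allP/(_ j (mem_index_enum j))|k _]; last exact: sqr_ge0.
by rewrite mulf_eq0 orbb => /eqP.
Qed.

Lemma is_derive_frob_inner_self a b (Z : R -> 'M[R]_(a, b)) (t : R) dZ :
  is_derive t 1 Z dZ ->
  is_derive t 1 (fun s => frob_inner (Z s) (Z s)) (2 * frob_inner (Z t) dZ).
Proof.
move=> HZ; have /is_derive_mxP HZZ := is_derive_mulmx (is_derive_trmx HZ) HZ.
have -> : (fun s => frob_inner (Z s) (Z s)) = \sum_i (fun s => ((Z s)^T *m Z s) i i).
  by apply/funext => s; rewrite fct_sumE.
apply: is_derive_eq.
rewrite -/(mxtrace _) mxtraceD -[X in X + _]mxtrace_tr trmx_mul trmxK.
by rewrite -/(frob_inner _ _) mulr2n -mulr2n mulr_natl.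
Qed.

Lemma frob_inner_mulmxl_le a b (L : 'M[R]_a) (Z : 'M[R]_(a, b)) K :
  (forall i j, `|L i j| <= K) -> frob_inner Z (L *m Z) <= a%:R * K * frob_inner Z Z.
Proof.
move=> LK; rewrite !frob_innerE.
apply: (@le_trans _ _ (\sum_i \sum_j \sum_k K / 2 * (Z i j ^+ 2 + Z k j ^+ 2))).
  apply: ler_sum => i _; apply: ler_sum => j _; rewrite mxE mulr_sumr.
  apply: ler_sum => k _; set x := Z i j; set y := Z k j.
  have amgm : `|x * y| <= (x ^+ 2 + y ^+ 2) / 2.
    by rewrite ler_norml; have := sqr_ge0 (x - y); have := sqr_ge0 (x + y); nra.
  have := normr_ge0 (x * y); have := ler_norm (L i k * (x * y)).
  rewrite normrM; have := LK i k; have := normr_ge0 (L i k); nra.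
have inner i j : \sum_k K / 2 * (Z i j ^+ 2 + Z k j ^+ 2) =
    K / 2 * (Z i j ^+ 2 *+ a + \sum_k Z k j ^+ 2).
  by rewrite -mulr_sumr big_split sumr_const card_ord.
under eq_bigr do under eq_bigr do rewrite inner.
under eq_bigr do rewrite -mulr_sumr big_split /=.
rewrite -mulr_sumr big_split /= sumr_const card_ord exchange_big /=.
under eq_bigr do rewrite sumrMnl.
rewrite sumrMnl [in leRHS]exchange_big /=.
under [in leRHS]eq_bigr do under eq_bigr do rewrite -expr2.
by rewrite -mulr_natl le_eqVlt; apply/predU1l; field.
Qed.

Lemma frob_inner_mulmxr_le a b (M : 'M[R]_b) (Z : 'M[R]_(a, b)) K :
  (forall i j, `|M i j| <= K) -> frob_inner Z (Z *m M) <= b%:R * K * frob_inner Z Z.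
Proof.
move=> MK; rewrite -frob_inner_tr trmx_mul -(frob_inner_tr Z).
by apply: frob_inner_mulmxl_le => i j; rewrite mxE.
Qed.

End Frobenius.

Section LinearMatrixODE.
Variable R : realType.

Lemma gronwall_le0 (phi : R -> R) (K : R) :
  (forall s : R, derivable phi s 1) ->
  (forall s : R, 0 < s < 1 -> derive1 phi s <= K * phi s) ->
  phi 0 = 0 -> phi 1 <= 0.
Proof.
move=> dphi phiK phi0.
pose e (s : R) := expR (- K * s).
have de (s : R) : is_derive s 1 e (expR (- K * s) * - K).
  apply: (@is_derive1_comp _ expR (fun s => - K * s)).
  by apply: is_derive_eq; exact: mulr1.
have dpsi (s : R) : is_derive s 1 (e * phi) (e s * (derive1 phi s - K * phi s)).
  apply: is_derive_eq; first exact: is_deriveM (de s) (derivableP (dphi s)).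
  by rewrite derive1E /e /GRing.scale /=; ring.
have psi_der (s : R) : derivable (e * phi) s 1 by case: (dpsi s).
have psi_cont : {within `[0, 1], continuous (e * phi)}%classic.
  by apply: derivable_within_continuous => s _; exact: psi_der.
have : e 1 * phi 1 <= e 0 * phi 0.
  apply: (ler0_derive1_nincr (fun s _ => psi_der s) _ psi_cont) => //= s.
  rewrite in_itv /= => s01; rewrite derive1E derive_val.
  by rewrite pmulr_rle0 ?expR_gt0 // subr_le0; exact: phiK.
by rewrite phi0 mulr0 pmulr_rle0 // expR_gt0.
Qed.

Lemma continuous_bounded_itv (V : normedModType R) (F : R -> V) (a b : R) :
  a <= b -> {within `[a, b], continuous F}%classic ->
  exists K, forall s, s \in `[a, b] -> `|F s| <= K.
Proof.
move=> ab cF.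
have cnF : {within `[a, b], continuous (fun s => `|F s|)}%classic.
  by move=> s; apply: continuous_comp; [exact: cF | exact: norm_continuous].
by have [c _ Fc] := EVT_max ab cnF; exists `|F c|.
Qed.

Lemma ler_mx_norm_entry a b (M : 'M[R]_(a, b)) i j : `|M i j| <= `|M|.
Proof. by rewrite [leRHS]/Num.Def.normr /= mx_normrE; exact: (le_bigmax _ _ (i, j)). Qed.

Lemma linear_mxode_zero a b (Z : R -> 'M[R]_(a, b)) (L : R -> 'M[R]_a)
    (M : R -> 'M[R]_b) :
  (forall s : R, is_derive s 1 Z (L s *m Z s + Z s *m M s)) ->
  {within `[0, 1], continuous L}%classic -> {within `[0, 1], continuous M}%classic ->
  Z 0 = 0 -> Z 1 = 0.
Proof.
move=> dZ cL cM Z0.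
have [KL KLP] := continuous_bounded_itv ler01 cL.
have [KM KMP] := continuous_bounded_itv ler01 cM.
have dphi s := is_derive_frob_inner_self (dZ s).
apply: frob_inner_eq0; apply/eqP; rewrite eq_le frob_inner_ge0 andbT.
apply: (gronwall_le0 (phi := fun s => frob_inner (Z s) (Z s))
          (K := 2 * (a%:R * KL + b%:R * KM))) => [s|s /andP[s0 s1]|];
  [by case: (dphi s) | | by rewrite Z0 /frob_inner mulmx0 mxtrace0].
have s01 : s \in `[0, 1] by rewrite in_itv /= !ltW.
have bL i j : `|L s i j| <= KL := le_trans (ler_mx_norm_entry _ i j) (KLP s s01).
have bM i j : `|M s i j| <= KM := le_trans (ler_mx_norm_entry _ i j) (KMP s s01).
have := frob_inner_mulmxl_le (Z s) bL; have := frob_inner_mulmxr_le (Z s) bM.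
rewrite derive1E derive_val frob_innerDr; lra.
Qed.

End LinearMatrixODE.

Section StiefelGeometry.
Variables (R : realType) (n p : nat).
Implicit Types (Y D E W : 'M[R]_(n, p)).

Lemma tangentB Y D1 D2 : tangent Y D1 -> tangent Y D2 -> tangent Y (D1 - D2).
Proof.
by rewrite /tangent /skew_mat mulmxBr raddfB /= => -> ->; rewrite opprB opprK addrC.
Qed.

Lemma tangentZ Y D (k : R) : tangent Y D -> tangent Y (k *: D).
Proof. by rewrite /tangent /skew_mat -scalemxAr !linearZ /= => ->; rewrite scalerN. Qed.

Lemma tangent_proj_tan Y W : stiefel Y -> tangent Y (proj_tan Y W).
Proof.
rewrite /tangent /skew_mat /proj_tan /symm => HY.
by rewrite mulmxBr mulmxA HY mul1mx; apply/matrixP => i j; rewrite !mxE; field.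
Qed.

Lemma tangent_rescaled_proj (gam : R) Y W :
  stiefel Y -> tangent Y (rescaled_proj gam Y W).
Proof. by move=> HY; apply/tangentZ/tangent_proj_tan. Qed.

Lemma tangent_backward (gam : R) (Us : nat -> 'M[R]_(n, p)) k D :
  stiefel (Us 0%N) -> tangent (Us 0%N) (backward gam Us k.+1 D).
Proof.
move=> HU0; elim: k D => [|k IHk] D; first exact: tangent_rescaled_proj.
exact: IHk.
Qed.

Lemma stiefel_normal_range Y E : stiefel Y ->
  (forall H, tangent Y H -> frob_inner E H = 0) -> E = Y *m (Y^T *m E).
Proof.
move=> HY normalE; set P := Y *m Y^T.
have PP : P *m P = P by rewrite /P mulmxA -(mulmxA Y) HY mulmx1.
have PT : P^T = P by rewrite /P trmx_mul trmxK.
have IP : (1%:M - P)^T *m (1%:M - P) = 1%:M - P.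
  rewrite [(1%:M - P)^T]linearB /= trmx1 PT mulmxBl mul1mx mulmxBr mulmx1 PP.
  by rewrite subrr subr0.
set H := (1%:M - P) *m E.
have tanH : tangent Y H.
  by rewrite /tangent /H mulmxA mulmxBr mulmx1 mulmxA HY mul1mx subrr mul0mx
     /skew_mat trmx0 oppr0.
have : frob_inner H H = 0.
  rewrite -(normalE _ tanH) /frob_inner /H trmx_mul !mulmxA; congr (\tr (_ *m _)).
  by rewrite -mulmxA IP.
by move/frob_inner_eq0/eqP; rewrite /H mulmxBl mul1mx subr_eq0 mulmxA => /eqP.
Qed.

Lemma stiefel_normal_sym Y E : stiefel Y ->
  (forall H, tangent Y H -> frob_inner E H = 0) -> (Y^T *m E)^T = Y^T *m E.
Proof.
move=> HY normalE; set B := Y^T *m E; set K := B - B^T.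
have KT : K^T = - K by rewrite /K linearB /= trmxK opprB.
have tanYK : tangent Y (Y *m K) by rewrite /tangent mulmxA HY mul1mx.
have BK : \tr (B^T *m K) = 0.
  by rewrite -(normalE _ tanYK) /frob_inner /B trmx_mul trmxK !mulmxA.
have : frob_inner K K = 0.
  rewrite /frob_inner {1}/K [(B - B^T)^T]linearB /= trmxK mulmxBl raddfB /= BK sub0r.
  by rewrite -mxtrace_tr trmx_mul KT mulNmx linearN /= opprK mxtrace_mulC.
by move/frob_inner_eq0/eqP; rewrite subr_eq0 => /eqP <-.
Qed.

End StiefelGeometry.

Lemma alpha_coef_neq1 (R : realType) (alpha : R) : alpha_coef alpha != 1.
Proof.
rewrite /alpha_coef; have [->|a1] := eqVneq (alpha + 1) 0.
  by rewrite mulr0 invr0 mulr0 eq_sym oner_eq0.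
have a2 : 2 * (alpha + 1) != 0 by rewrite mulf_neq0 ?pnatr_eq0.
by apply/eqP => /(canRL (divfK a2)); rewrite mul1r; lra.
Qed.

Section Geodesic.
Variables (R : realType) (n p : nat) (alpha : R) (g : R -> 'M[R]_(n, p)).
Hypothesis g_geo : alpha_geodesic alpha g.
Implicit Types s : R.
Local Notation c := (alpha_coef alpha).
Local Notation dg := (derive1 g).
Local Notation ddg := (derive1 (derive1 g)).

Definition alpha_momentum s := dg s - c *: (g s *m (g s)^T *m dg s).
Definition angular_velocity s := (g s)^T *m dg s.
Local Notation Om := angular_velocity.

Lemma geodesic_stiefel s : (g s)^T *m g s = 1%:M.
Proof. by case: g_geo => + _; apply. Qed.

Lemma is_derive_geodesic s : is_derive s 1 g (dg s).
Proof. by case: g_geo => _ [+ _] => /(_ s) /derivableP; rewrite -derive1E. Qed.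

Lemma is_derive_velocity s : is_derive s 1 dg (ddg s).
Proof. by case: g_geo => _ [_ [+ _]] => /(_ s) /derivableP; rewrite -derive1E. Qed.

Lemma is_derive_alpha_momentum s : is_derive s 1 alpha_momentum
  (ddg s - c *: ((dg s *m (g s)^T + g s *m (dg s)^T) *m dg s
                 + g s *m (g s)^T *m ddg s)).
Proof.
have gD := is_derive_geodesic s; have dgD := is_derive_velocity s.
exact: is_deriveB dgD (is_deriveZ c (is_derive_mulmx
  (is_derive_mulmx gD (is_derive_trmx gD)) dgD)).
Qed.

Lemma euler_lagrange s H : tangent (g s) H ->
  frob_inner (derive1 alpha_momentum s + c *: (dg s *m (dg s)^T *m g s)) H = 0.
Proof. by case: g_geo => _ [_ [_ +]]; apply. Qed.

Lemma angular_velocity_skew s : (dg s)^T *m g s = - Om s.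
Proof.
have gD := is_derive_geodesic s.
move/eqP: (is_derive_const_eq0 geodesic_stiefel (is_derive_mulmx (is_derive_trmx gD) gD)).
by rewrite addr_eq0 => /eqP.
Qed.

Lemma trmx_angular_velocity s : (Om s)^T = - Om s.
Proof. by rewrite /angular_velocity trmx_mul trmxK angular_velocity_skew. Qed.

Lemma acceleration_gram s :
  (ddg s)^T *m g s + (g s)^T *m ddg s = - ((dg s)^T *m dg s *+ 2).
Proof.
have gram0 s' : (dg s')^T *m g s' + (g s')^T *m dg s' = 0.
  by rewrite angular_velocity_skew addNr.
have gD := is_derive_geodesic s; have dgD := is_derive_velocity s.
have dgTg := is_derive_mulmx (is_derive_trmx dgD) gD.
have gTdg := is_derive_mulmx (is_derive_trmx gD) dgD.
move/eqP: (is_derive_const_eq0 gram0 (is_deriveD dgTg gTdg)).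
by rewrite [_ + (g s)^T *m _]addrC addrACA -mulr2n addr_eq0 => /eqP.
Qed.

Lemma tr_geodesic_euler_lagrange s :
  (g s)^T *m (derive1 alpha_momentum s + c *: (dg s *m (dg s)^T *m g s))
  = - ((dg s)^T *m dg s + (2 * c) *: (Om s *m Om s)).
Proof.
have derive_momentum := @derive_val _ _ _ _ _ _ _ (is_derive_alpha_momentum s).
rewrite -derive1E in derive_momentum.
set E := derive1 alpha_momentum s + c *: (dg s *m (dg s)^T *m g s).
set X := (g s)^T *m ddg s; set Y := (dg s)^T *m dg s; set O := Om s.
have gTE : (g s)^T *m E = (1 - c) *: X - (2 * c) *: (O *m O) - c *: Y.
  have gT_dggTdg : (g s)^T *m (dg s *m (g s)^T *m dg s) = O *m O by rewrite !mulmxA.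
  have gT_gdgTdg : (g s)^T *m (g s *m (dg s)^T *m dg s) = Y.
    by rewrite !mulmxA geodesic_stiefel mul1mx.
  have gT_ggTddg : (g s)^T *m (g s *m (g s)^T *m ddg s) = X.
    by rewrite !mulmxA geodesic_stiefel mul1mx.
  have gT_dgdgTg : (g s)^T *m (dg s *m (dg s)^T *m g s) = - (O *m O).
    by rewrite -[dg s *m _ *m g s]mulmxA angular_velocity_skew mulmxN mulmxN mulmxA.
  rewrite /E derive_momentum mulmxDr mulmxBr -!scalemxAr mulmxDr !mulmxDl mulmxDr.
  rewrite gT_dggTdg gT_gdgTdg gT_ggTddg gT_dgdgTg -/X.
  clearbody X Y O; move: (O *m O) => OO.
  by apply/matrixP => i j; rewrite !mxE; ring.
have OOT : (O *m O)^T = O *m O.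
  by rewrite trmx_mul trmx_angular_velocity mulmxN mulNmx opprK.
have YT : Y^T = Y by rewrite /Y trmx_mul trmxK.
have XXT : X^T + X = - (Y *+ 2).
  by rewrite -(acceleration_gram s) /X trmx_mul trmxK.
have gTE_sym := stiefel_normal_sym (geodesic_stiefel s) (@euler_lagrange s).
rewrite -/E gTE in gTE_sym; rewrite gTE.
clearbody X Y O; move: (O *m O) OOT gTE_sym => OO OOT gTE_sym.
have c1 : 1 - c != 0 by rewrite subr_eq0 eq_sym alpha_coef_neq1.
apply/matrixP => i j; move/matrixP: gTE_sym => /(_ j i).
move/matrixP: OOT => /(_ i j); move/matrixP: YT => /(_ i j).
move/matrixP: XXT => /(_ i j).
rewrite !mxE => XXij Yij OOij gTEji; rewrite Yij OOij in gTEji.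
have Xij : X i j = X j i by apply: (mulfI c1); lra.
have -> : X i j = - Y i j by lra.
ring.
Qed.

Lemma geodesic_equation s : is_derive s 1 alpha_momentum
  (c *: (dg s *m Om s) - g s *m ((dg s)^T *m dg s + (2 * c) *: (Om s *m Om s))).
Proof.
apply: (is_derive_eq (is_derive_alpha_momentum s)).
rewrite -[LHS](@derive_val _ _ _ _ _ _ _ (is_derive_alpha_momentum s)) -derive1E.
have := stiefel_normal_range (geodesic_stiefel s) (@euler_lagrange s).
rewrite tr_geodesic_euler_lagrange -[dg s *m _ *m g s]mulmxA angular_velocity_skew.
by move=> /(canRL (addrK _)) ->; rewrite !mulmxN scalerN opprK addrC.
Qed.

Lemma velocity_alpha_momentum s : dg s = g s *m (c *: Om s) + alpha_momentum s.
Proof. by rewrite /alpha_momentum /angular_velocity -mulmxA -scalemxAr addrC subrK. Qed.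

Lemma velocity_of_alpha_momentum s :
  dg s = (1%:M + (c / (1 - c)) *: (g s *m (g s)^T)) *m alpha_momentum s.
Proof.
have c1 : 1 - c != 0 by rewrite subr_eq0 eq_sym alpha_coef_neq1.
have gTW : (g s)^T *m alpha_momentum s = (1 - c) *: Om s.
  rewrite /alpha_momentum mulmxBr -scalemxAr !mulmxA geodesic_stiefel // mul1mx.
  by rewrite scalerBl scale1r.
rewrite mulmxDl mul1mx -scalemxAl -mulmxA gTW -scalemxAr scalerA divfK //.
by rewrite scalemxAr addrC -velocity_alpha_momentum.
Qed.

Lemma derivable_angular_velocity s : derivable Om s 1.
Proof.
have dgs : derivable g s 1 by case: (is_derive_geodesic s).
have ddgs : derivable dg s 1 by case: (is_derive_velocity s).
exact: derivable_mulmx (derivable_trmx dgs) ddgs.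
Qed.

Lemma geodesic_annihilated k (P : 'M[R]_(k, n)) :
  P *m g 0 = 0 -> P *m dg 0 = 0 -> P *m g 1 = 0.
Proof.
move=> Pg0 Pdg0.
pose N s := c ^+ 2 *: (Om s *m Om s)
  - ((dg s)^T *m dg s + (2 * c) *: (Om s *m Om s)).
pose M s := block_mx (c *: Om s) (N s) 1%:M (c *: Om s).
pose Z s := row_mx (P *m g s) (P *m alpha_momentum s).
have dZ s : is_derive s 1 Z (0 *m Z s + Z s *m M s).
  apply: is_derive_eq (is_derive_row_mx (is_derive_mulmxl P (is_derive_geodesic s))
    (is_derive_mulmxl P (geodesic_equation s))) _.
  rewrite mul0mx add0r mul_row_block mulmx1 -![P *m g s *m _]mulmxA.
  rewrite -[P *m alpha_momentum s *m _]mulmxA -!mulmxDr.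
  congr (row_mx (P *m _) (P *m _)); first exact: velocity_alpha_momentum.
  rewrite /N; set O := Om s; set Y := (dg s)^T *m dg s.
  have dgE : dg s = g s *m (c *: O) + alpha_momentum s := velocity_alpha_momentum s.
  clearbody O Y; rewrite dgE mulmxBr mulmxDl scalerDr -mulmxA -!scalemxAl -!scalemxAr.
  by rewrite scalerA -expr2 addrAC.
have cL : {within `[0, 1], continuous (fun _ : R => (0 : 'M[R]_k))}%classic.
  by apply: derivable_within_continuous => s _; exact: derivable_cst.
have cM : {within `[0, 1], continuous M}%classic.
  apply: derivable_within_continuous => s _.
  have dO : derivable Om s 1 by exact: derivable_angular_velocity.
  have ddgs : derivable dg s 1 by case: (is_derive_velocity s).
  have dOO := derivable_mulmx dO dO.
  have cO := derivable_scalemx (k := c) dO.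
  apply: derivable_block_mx; [exact: cO | | exact: derivable_cst | exact: cO].
  apply: derivableB; first exact: derivable_scalemx dOO.
  apply: derivableD; last exact: derivable_scalemx dOO.
  exact: derivable_mulmx (derivable_trmx ddgs) ddgs.
have Z0 : Z 0 = 0.
  rewrite /Z /alpha_momentum mulmxBr Pdg0 -scalemxAr !mulmxA Pg0 !mul0mx.
  by rewrite scaler0 subr0 row_mx0.
by move: (linear_mxode_zero dZ cL cM Z0); rewrite /Z -row_mx0 => /eq_row_mx [].
Qed.

Lemma geodesic_rest : dg 0 = 0 -> g 1 = g 0.
Proof.
move=> dg0.
pose G s := 1%:M + (c / (1 - c)) *: (g s *m (g s)^T).
pose A s := c *: (dg s *m (g s)^T) - g s *m (dg s)^T
  - (2 * c) *: (g s *m Om s *m (g s)^T).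
pose L s := block_mx (0 : 'M[R]_n) (G s) 0 (A s *m G s).
pose Z s := col_mx (g s - g 0) (alpha_momentum s).
have dZ s : is_derive s 1 Z (L s *m Z s + Z s *m 0).
  apply: is_derive_eq (is_derive_col_mx (is_deriveB (is_derive_geodesic s)
    (is_derive_cst (g 0) s 1)) (geodesic_equation s)) _.
  rewrite mulmx0 addr0 mul_block_col !mul0mx !add0r subr0 -mulmxA.
  rewrite -velocity_of_alpha_momentum; congr col_mx; rewrite /A; set O := Om s.
  have gTdg : (g s)^T *m dg s = O by [].
  clearbody O; rewrite !mulmxBl -!scalemxAl -!mulmxA gTdg mulmxDr opprD addrA.
  by rewrite -scalemxAr.
have cL : {within `[0, 1], continuous L}%classic.
  apply: derivable_within_continuous => s _.
  have dgs : derivable g s 1 by case: (is_derive_geodesic s).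
  have ddgs : derivable dg s 1 by case: (is_derive_velocity s).
  have dO : derivable Om s 1 by exact: derivable_angular_velocity.
  have dG : derivable G s 1.
    apply: derivableD; first exact: derivable_cst.
    exact: derivable_scalemx (derivable_mulmx dgs (derivable_trmx dgs)).
  have dA : derivable A s 1.
    apply: derivableB; last exact: derivable_scalemx
      (derivable_mulmx (derivable_mulmx dgs dO) (derivable_trmx dgs)).
    apply: derivableB; last exact: derivable_mulmx dgs (derivable_trmx ddgs).
    exact: derivable_scalemx (derivable_mulmx ddgs (derivable_trmx dgs)).
  apply: derivable_block_mx; [exact: derivable_cst | exact: dG | exact: derivable_cst |].
  exact: derivable_mulmx dA dG.
have cM : {within `[0, 1], continuous (fun _ : R => (0 : 'M[R]_p))}%classic.
  by apply: derivable_within_continuous => s _; exact: derivable_cst.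
have Z0 : Z 0 = 0.
  by rewrite /Z subrr /alpha_momentum dg0 mulmx0 scaler0 subrr col_mx0.
move: (linear_mxode_zero dZ cL cM Z0); rewrite /Z -col_mx0 => /eq_col_mx [/eqP].
by rewrite subr_eq0 => /eqP.
Qed.

End Geodesic.

Section Exponential.
Variables (R : realType) (n p : nat) (alpha : R).
Implicit Types U D : 'M[R]_(n, p).

Lemma alpha_geodesic_cst U : stiefel U -> alpha_geodesic alpha (fun=> U).
Proof.
move=> HU; have d0 (X : 'M[R]_(n, p)) : derive1 (fun _ : R => X) = fun=> 0.
  by apply/funext => s; exact: derive1_cst.
split=> //; rewrite d0; split=> [s|]; first exact: derivable_cst.
split=> [s|s H _]; first exact: derivable_cst.
under eq_fun do rewrite mulmx0 scaler0 subr0.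
by rewrite d0 !mul0mx scaler0 addr0 /frob_inner trmx0 mul0mx mxtrace0.
Qed.

Lemma alpha_Exp_zero U : stiefel U -> alpha_Exp alpha U 0 = U.
Proof.
move=> HU; rewrite /alpha_Exp; case: xgetP => [g _ [geo [g0 dg0]] | nogeo].
  by rewrite -g0; exact: geodesic_rest geo dg0.
exfalso; apply: (nogeo (fun=> U)); split; first exact: alpha_geodesic_cst.
by split=> //; exact: derive1_cst.
Qed.

Lemma alpha_Exp_annihilated k (P : 'M[R]_(k, n)) U D :
  P *m U = 0 -> P *m D = 0 -> P *m alpha_Exp alpha U D = 0.
Proof.
rewrite /alpha_Exp; case: xgetP => [g _ [geo [g0 dg0]] PU PD | _ _ _]; last first.
  by rewrite mulmx0.
by apply: (geodesic_annihilated geo); rewrite ?g0 ?dg0.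
Qed.

End Exponential.

(* [(X^T <= S)%MS] says that the columns of [X] lie in the span of the rows of [S]; for
   [S = U^T + V^T] it means [X = U A + V M] (see [sub_addsmxP]). *)
Section ColumnSpace.
Variables (R : realType) (n p : nat).
Implicit Types (X Y W D : 'M[R]_(n, p)).

Lemma trmx_submxE m X (S : 'M[R]_(m, n)) :
  (X^T <= S)%MS = ((cokermx S)^T *m X == 0).
Proof. by rewrite submxE -(inj_eq trmx_inj) trmx_mul trmxK trmx0. Qed.

Lemma trmx_mulmx_sub m X (M : 'M[R]_p) (S : 'M[R]_(m, n)) :
  (X^T <= S)%MS -> ((X *m M)^T <= S)%MS.
Proof. by rewrite trmx_mul; apply: submx_trans (submxMl _ _). Qed.

Lemma proj_tan_sub m Y W (S : 'M[R]_(m, n)) :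
  (Y^T <= S)%MS -> (W^T <= S)%MS -> ((proj_tan Y W)^T <= S)%MS.
Proof.
move=> sY sW; rewrite /proj_tan raddfB /= addmx_sub // eqmx_opp.
exact: trmx_mulmx_sub.
Qed.

Lemma rescaled_proj_sub m (gam : R) Y W (S : 'M[R]_(m, n)) :
  (Y^T <= S)%MS -> (W^T <= S)%MS -> ((rescaled_proj gam Y W)^T <= S)%MS.
Proof. by move=> sY sW; rewrite /rescaled_proj linearZ /= scalemx_sub ?proj_tan_sub. Qed.

Lemma backward_sub m (gam : R) (Us : nat -> 'M[R]_(n, p)) k D (S : 'M[R]_(m, n)) :
  (forall j, ((Us j)^T <= S)%MS) -> (D^T <= S)%MS -> ((backward gam Us k D)^T <= S)%MS.
Proof.
move=> sUs; elim: k D => [|k IHk] D sD //=.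
by apply: IHk; exact: rescaled_proj_sub.
Qed.

Lemma alpha_Exp_sub m (alpha : R) (U D : 'M[R]_(n, p)) (S : 'M[R]_(m, n)) :
  (U^T <= S)%MS -> (D^T <= S)%MS -> ((alpha_Exp alpha U D)^T <= S)%MS.
Proof. by rewrite !trmx_submxE => /eqP PU /eqP PD; rewrite alpha_Exp_annihilated. Qed.

Lemma tangent_sub_decomposition (U V X : 'M[R]_(n, p)) :
  stiefel U -> U^T *m V = 0 -> tangent U X -> (X^T <= U^T + V^T)%MS ->
  exists A M : 'M[R]_p, skew_mat A /\ X = U *m A + V *m M.
Proof.
move=> HU UV tX /sub_addsmxP [[K1 K2] /= XK].
have EX : X = U *m K1^T + V *m K2^T by rewrite -[X]trmxK XK raddfD /= !trmx_mul !trmxK.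
exists K1^T, K2^T; split=> //.
by move: tX; rewrite /tangent EX mulmxDr !mulmxA HU UV mul1mx mul0mx addr0.
Qed.

End ColumnSpace.

(* [Q] need not be orthogonal to [U] when [Nh] is singular, hence the use of [V = Q Nh]. *)
Section ShootingInvariant.
Variables (R : realType) (n p : nat) (U Ut : 'M[R]_(n, p)).
Hypothesis HU : stiefel U.
Local Notation V := ((1%:M - U *m U^T) *m Ut).
Local Notation S := (U^T + V^T)%MS.

Lemma stiefel_orth_residual : U^T *m V = 0.
Proof. by rewrite mulmxA mulmxBr mulmx1 mulmxA HU mul1mx subrr mul0mx. Qed.

Lemma target_sub : (Ut^T <= S)%MS.
Proof.
apply/sub_addsmxP; exists ((U^T *m Ut)^T, 1%:M) => /=.
have E : Ut = U *m (U^T *m Ut) + V by rewrite mulmxBl mul1mx mulmxA addrC subrK.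
by rewrite mul1mx {1}E raddfD /= trmx_mul.
Qed.

Lemma shooting_body_invariant (alpha : R) m (t : nat -> R) D :
  t 0%N = 0 -> tangent U D -> (D^T <= S)%MS ->
  tangent U (shooting_body alpha U Ut m t D).1.1 /\
  (((shooting_body alpha U Ut m t D).1.1)^T <= S)%MS.
Proof.
move=> t0 tD sD; rewrite /shooting_body /=.
have sUs j : ((alpha_Exp alpha U (t j *: D))^T <= S)%MS.
  by apply: alpha_Exp_sub; rewrite ?addsmxSl // linearZ /= scalemx_sub.
have Us0 : alpha_Exp alpha U (t 0%N *: D) = U by rewrite t0 scale0r alpha_Exp_zero.
split; first by rewrite -{1}Us0; apply: tangent_backward; rewrite Us0.
apply: backward_sub => //; apply: rescaled_proj_sub => //.
by rewrite raddfB /= addmx_sub // eqmx_opp target_sub.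
Qed.

Lemma shooting_state_invariant (alpha : R) m (t : nat -> R) k :
  t 0%N = 0 ->
  tangent U (shooting_state alpha U Ut m t k).1 /\
  (((shooting_state alpha U Ut m t k).1)^T <= S)%MS.
Proof.
move=> t0; elim: k => [|k [tD sD]] /=.
  split; first exact: tangent_rescaled_proj.
  by apply: rescaled_proj_sub; rewrite ?addsmxSl ?target_sub.
have [tDs sDs] := shooting_body_invariant alpha m t0 tD sD.
split; first exact: tangentB.
by rewrite raddfB /= addmx_sub // eqmx_opp.
Qed.

End ShootingInvariant.

Theorem proposition3p5 (R : realType) (n p : nat) (alpha : R)
    (U Ut Q : 'M[R]_(n, p)) (Nh : 'M[R]_p) (eps : R) (m : nat) (t : nat -> R) :
  (p <= n)%N ->
  alpha != -1 ->
  stiefel U -> stiefel Ut ->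
  (* compact QR-decomposition Q Nh = (I_n - U U^T) Ut *)
  stiefel Q ->
  (forall i j : 'I_p, (j < i)%N -> Nh i j = 0) ->
  Q *m Nh = (1%:M - U *m U^T) *m Ut ->
  0 < eps ->
  t 0%N = 0 -> t m = 1 -> (forall j, (j < m)%N -> t j < t j.+1) ->
  forall k : nat,
    (forall i, (i < k)%N -> eps < (shooting_state alpha U Ut m t i).2) ->
    (exists (A Rm : 'M[R]_p), skew_mat A /\
        (shooting_state alpha U Ut m t k).1 = U *m A + Q *m Rm) /\
    (eps < (shooting_state alpha U Ut m t k).2 ->
     exists (As Rs : 'M[R]_p), skew_mat As /\
        (shooting_body alpha U Ut m t (shooting_state alpha U Ut m t k).1).1.1
          = U *m As + Q *m Rs).
Proof.
move=> _ _ HU _ _ _ QNh _ t0 _ _ k _.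
have decomp X : tangent U X ->
    (X^T <= U^T + ((1%:M - U *m U^T) *m Ut)^T)%MS ->
    exists A Rm : 'M[R]_p, skew_mat A /\ X = U *m A + Q *m Rm.
  move=> tX sX; have [A [M [skA ->]]] :=
    tangent_sub_decomposition HU (stiefel_orth_residual Ut HU) tX sX.
  by exists A, (Nh *m M); rewrite mulmxA QNh.
have [tD sD] := shooting_state_invariant Ut HU alpha m k t0.
split; first exact: decomp.
by move=> _; have [tDs sDs] := shooting_body_invariant HU alpha m t0 tD sD; exact: decomp.
Qed.
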